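(* Let $G$ be a finite solvable group with a fix-point-free automorphism $\alpha:G\to G$, and let $r(t)\in\mathbb{Z}[t]$ be an identity of $\alpha$. Then $G$ has a characteristic $\operatorname{Cong}(r(t))$-subgroup $S$ such that $G/S$ is a nilpotent $\operatorname{Cong}(r(t))'$-group.
   Context: Fix-point-free: fixes only the identity. For $s(t)=b_0+\cdots+b_et^e\in\mathbb{Z}[t]$, $x^{s(\alpha)}:=x^{b_0}\alpha(x^{b_1})\cdots\alpha^e(x^{b_e})$; $r(t)$ is an identity of $\alpha$ if $r=r_1+\cdots+r_k$ in $\mathbb{Z}[t]$ with $x^{r_1(\alpha)}\cdots x^{r_k(\alpha)}=1_G$ for all $x\in G$. For $r=\sum a_it^i$, $r_{u,j}(t):=\sum_{i\equiv j\bmod u}a_it^i$; $\operatorname{Cong}(r)$ is the non-negative generator of $\mathbb{Z}\cap\bigcap_{1<u\le\deg r+1}(r_{u,0}\mathbb{Z}[t]+\cdots+r_{u,u-1}\mathbb{Z}[t])$. For $n\in\mathbb{Z}$, an $n$-group is a group in which every element's order divides some natural power of $n$; an $n'$-group is a group $H$ with no $n$-torsion, i.e. only $h=1_H$ satisfies $h^n=1_H$. *)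

From mathcomp Require Import all_boot all_order all_algebra all_fingroup all_solvable.
Set Implicit Arguments. Unset Strict Implicit. Unset Printing Implicit Defensive.
Import GRing.Theory.
Local Open Scope ring_scope.

Definition gexpz (gT : finGroupType) (x : gT) (z : int) : gT :=
  match z with
  | Posz n => (x ^+ n)%g
  | Negz n => (x ^- n.+1)%g
  end.

(* x^{s(alpha)} := x^{b_0} alpha(x^{b_1}) ... alpha^e(x^{b_e})  for s = sum b_i t^i *)
Definition polyact (gT : finGroupType) (alpha : gT -> gT) (s : {poly int}) (x : gT) : gT :=
  (\prod_(i < size s) iter i alpha (gexpz x s`_i))%g.

Definition is_identity (gT : finGroupType) (G : {set gT}) (alpha : gT -> gT)
    (r : {poly int}) : Prop :=
  exists rs : seq {poly int},
    \sum_(s <- rs) s = r /\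
    forall x, x \in G -> (\prod_(s <- rs) polyact alpha s x)%g = 1%g.

Definition rpart (r : {poly int}) (u j : nat) : {poly int} :=
  \poly_(i < size r) (if (i %% u == j)%N then r`_i else 0).

Definition in_part_ideal (r : {poly int}) (u : nat) (c : int) : Prop :=
  exists q : 'I_u -> {poly int}, c%:P = \sum_(j < u) q j * rpart r u j.

(* n = Cong(r): the non-negative generator of
   Z ∩ ⋂_{1 < u <= deg r + 1} (r_{u,0} Z[t] + ... + r_{u,u-1} Z[t]).
   deg r + 1 = size r; for deg r <= 0 we use u = 2. *)
Definition is_Cong (r : {poly int}) (n : nat) : Prop :=
  forall c : int,
    (forall u : nat, (1 < u <= maxn 2 (size r))%N -> in_part_ideal r u c) <->
    (n%:Z %| c)%Z.

Definition is_ngroup (gT : finGroupType) (H : {set gT}) (n : nat) : Prop :=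
  forall h, h \in H -> exists k : nat, (#[h]%g %| n ^ k)%N.

Definition is_nprimegroup (gT : finGroupType) (H : {set gT}) (n : nat) : Prop :=
  forall h, h \in H -> (h ^+ n)%g = 1%g -> h = 1%g.

(* Let n = Cong(r). For n = 0 take S = G; otherwise take S = O_pi(n)(G). The
   hypotheses pass to G/S, so it suffices that a solvable G with O_pi(n)(G) = 1
   is a nilpotent pi(n)'-group. Induct on |G|: a minimal alpha-invariant
   normal subgroup N is elementary abelian for a prime p not dividing n, and
   the heart of the proof is that every p'-subgroup centralises N. Otherwise
   an alpha-invariant p'-subgroup E with E' <= C(N) (from an alpha-invariant
   Hall subgroup, via the derived series) acts nontrivially on N, seen as an
   F_p-module on which alpha acts by a matrix A with r(A) = 0. Over the
   algebraic closure E has a common eigenvector w with a nontrivial character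
   chi, and the least m > 0 with chi o alpha^m = chi on E exceeds 1 because
   alpha is fixed-point-free. The projector sum_e chi(e)^-1 rho(e) keeps
   w A^t when m divides t and kills it otherwise; applied to
   w A^(m-l) r(A) = 0 it shows that w annihilates every r_{m,l}(A), and then
   the definition of Cong(r) forces p | n. Hence N is central, and G is
   nilpotent since G/N is. *)

From HB Require Import structures.
From mathcomp Require Import all_boot all_order all_algebra all_fingroup all_solvable.
From mathcomp Require Import closed_field mxrepresentation mxabelem zify.

Set Implicit Arguments.
Unset Strict Implicit.
Unset Printing Implicit Defensive.

Lemma dvdn_subnD_mod m j k : j < m -> (m %| m - j + k) = (k %% m == j).
Proof.
move=> ltjm; rewrite /dvdn -modnDmr.
have : k %% m < m by rewrite ltn_mod; lia.
move: (k %% m) => a ltam.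
case: (ltngtP a j) => [ltaj | ltja | ->].
- by rewrite modn_small; apply/eqP; lia.
- have -> : m - j + a = a - j + m by lia.
  by rewrite modnDr modn_small; apply/eqP; lia.
- by rewrite subnK ?modnn ?eqxx //; lia.
Qed.

Lemma dvdn_periods (P : pred nat) o : 0 < o -> P o ->
  (forall a b, P a -> P (a + b) = P b) -> exists2 m, 0 < m & P =1 dvdn m.
Proof.
move=> o_gt0 Po Padd.
have exP : exists t, (0 < t) && P t by exists o; rewrite o_gt0.
case: (ex_minnP exP) => m /andP[m_gt0 Pm] m_min; exists m => // t.
have P0 : P 0 by rewrite -(Padd o) ?addn0.
have Pmul k : P (k * m) by elim: k => // k IH; rewrite mulSn Padd.
apply/idP/idP => [Pt | /dvdnP[k ->] //].
have Pmod : P (t %% m) by rewrite -(Padd (t %/ m * m)) -?divn_eq.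
rewrite /dvdn eqn0Ngt; apply/negP => mod_gt0.
by have := m_min _ (introT andP (conj mod_gt0 Pmod)); rewrite leqNgt ltn_pmod.
Qed.

Import GRing.Theory.
Local Open Scope ring_scope.

Lemma perm_stableE (T : finType) (s : {perm T}) (S : {set T}) :
  {in S, forall x, s x \in S} -> forall x, (s x \in S) = (x \in S).
Proof.
move=> sS x; apply/idP/idP => [|/sS //].
have sSS : s @: S = S.
  apply/eqP; rewrite eqEcard card_imset ?leqnn ?andbT; last exact: perm_inj.
  by apply/subsetP => _ /imsetP[y Sy ->]; apply: sS.
by rewrite -{1}sSS => /imsetP[y Sy /perm_inj ->].
Qed.

Lemma perm_iter_stableE (T : finType) (s : {perm T}) (S : {set T}) t :
  {in S, forall x, s x \in S} -> forall x, (iter t s x \in S) = (x \in S).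
Proof. by move=> sS x; elim: t => //= t <-; apply: perm_stableE. Qed.

Lemma iter_morph (gT : finGroupType) (E : {set gT}) (f : gT -> gT) t :
  {in E, forall x, f x \in E} -> {in E &, {morph f : x y / (x * y)%g}} ->
  {in E &, {morph iter t f : x y / (x * y)%g}}.
Proof. by move=> fE fM x y Ex Ey; elim: t => //= t ->; rewrite fM ?(iter_in _ fE). Qed.

Lemma sum_group_hom_eq0 (K : fieldType) (gT : finGroupType) (E : {group gT})
    (phi : gT -> K) e0 :
  e0 \in E -> {in E &, {morph phi : x y / (x * y)%g >-> x * y}} -> phi e0 != 1 ->
  \sum_(e in E) phi e = 0.
Proof.
move=> Ee0 phiM phi_e0; set S := \sum_(e in E) phi e.
have : S = phi e0 * S.
  rewrite {1}/S (reindex_inj (mulgI e0)) /= mulr_sumr.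
  by apply: eq_big => [e | e]; rewrite groupMl // => Ee; rewrite phiM.
move/eqP; rewrite -subr_eq0 -{1}[S]mul1r -mulrBl mulf_eq0 subr_eq0 eq_sym.
by rewrite (negPf phi_e0) => /eqP.
Qed.

Section FixedPointFree.

Local Open Scope group_scope.

Variables (gT : finGroupType) (H : {group gT}) (alpha : gT -> gT).
Hypotheses (aH : {in H, forall x, alpha x \in H})
  (aM : {in H &, {morph alpha : x y / x * y}})
  (fpf : {in H, forall x, alpha x = x -> x = 1}).

Lemma fpf_invmul_inj : {in H &, injective (fun x => x^-1 * alpha x)}.
Proof.
move=> x y Hx Hy /= eq_xy.
have aV : alpha x^-1 = (alpha x)^-1 := morphV (Morphism aM) Hx.
have : alpha (y * x^-1) = y * x^-1.
  rewrite aM ?groupV // aV.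
  by rewrite -[y * x^-1](mulgK (alpha x)) -(mulgA y) eq_xy mulKVg.
by move/fpf; rewrite groupM ?groupV // => /(_ isT)/eqP; rewrite -eq_mulgV1 => /eqP.
Qed.

Lemma fpf_invmul_onto : [set x^-1 * alpha x | x in H] = H.
Proof.
apply/eqP; rewrite eqEcard card_in_imset ?leqnn ?andbT; last exact: fpf_invmul_inj.
by apply/subsetP => _ /imsetP[x Hx ->]; rewrite groupM ?groupV ?aH.
Qed.

End FixedPointFree.

Lemma scaler_injl (F : fieldType) (V : lmodType F) (v : V) :
  v != 0 -> injective ( *:%R^~ v : F -> V).
Proof.
move=> vn0 a b /eqP; rewrite -subr_eq0 -scalerBl scaler_eq0 (negPf vn0) orbF.
by rewrite subr_eq0 => /eqP.
Qed.

Section HornerInt.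

Variables (K : fieldType) (d : nat) (A : 'M[K]_d.+1).

Definition horner_mxz (P : {poly int}) : 'M[K]_d.+1 := horner_mx A (map_poly intr P).

Lemma horner_mxzE (P : {poly int}) m : (size P <= m)%N ->
  horner_mxz P = \sum_(i < m) (P`_i)%:~R *: A ^+ i.
Proof.
move=> le_P_m; rewrite /horner_mxz -[P in map_poly _ P]coefK poly_def.
rewrite (big_ord_widen m (fun i => P`_i *: 'X^i)) // big_mkcond /=.
rewrite !rmorph_sum /=; apply: eq_bigr => i _.
case: ifP => [_ | /negbT]; last first.
  by rewrite -leqNgt => le_P_i; rewrite nth_default // map_poly0 rmorph0 mulr0z scale0r.
by rewrite map_polyZ map_polyXn /= linearZ /= rmorphXn /= horner_mx_X.
Qed.

Lemma horner_mxz_rpart (r : {poly int}) u j :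
  horner_mxz (rpart r u j) =
  \sum_(i < size r) (if (i %% u == j)%N then r`_i else 0)%:~R *: A ^+ i.
Proof.
rewrite (horner_mxzE (size_poly _ _)); apply: eq_bigr => i _.
by rewrite coef_poly ltn_ord.
Qed.

Lemma Cong_natr_eq0 (r : {poly int}) n (w : 'rV[K]_d.+1) u :
  is_Cong r n -> w != 0 -> (1 < u <= maxn 2 (size r))%N ->
  (forall j, (j < u)%N -> w *m horner_mxz (rpart r u j) = 0) -> n%:R = 0 :> K.
Proof.
move=> Cong_n wn0 u_range w_rpart.
have [q def_n] := proj2 (Cong_n n%:Z) (dvdzz _) u u_range.
have : w *m horner_mxz (n%:Z)%:P = 0.
  rewrite def_n /horner_mxz !rmorph_sum mulmx_sumr big1 // => j _.
  rewrite !rmorphM /= comm_horner_mx2 -mulmxE mulmxA.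
  by rewrite [w *m _]w_rpart ?mul0mx.
rewrite /horner_mxz map_polyC horner_mx_C /= mul_mx_scalar => /eqP.
by rewrite scaler_eq0 (negPf wn0) orbF -pmulrn => /eqP.
Qed.

End HornerInt.

Lemma rpart_monomial (r : {poly int}) m k : (size r <= m)%N -> (k < m)%N ->
  rpart r m k = r`_k *: 'X^k.
Proof.
move=> le_r_m lt_k_m; apply/polyP => i; rewrite coef_poly coefZ coefXn.
case: ltnP => [lt_i_r | le_r_i].
  by rewrite modn_small ?(leq_trans lt_i_r) //; case: eqP => [->|]; rewrite ?mulr1 ?mulr0.
by case: eqP => [<-|]; rewrite ?mulr0 // nth_default.
Qed.

Lemma horner_mxz_map (K L : fieldType) (f : {rmorphism K -> L}) d (A : 'M[K]_d.+1) r :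
  horner_mxz (map_mx f A) r = map_mx f (horner_mxz A r).
Proof.
rewrite !(horner_mxzE _ (leqnn (size r))) raddf_sum /=; apply: eq_bigr => i _.
by rewrite map_mxZ rmorph_int rmorphXn.
Qed.

Section Eigenvectors.

Variables (K : fieldType) (d : nat).
Implicit Types (M : 'M[K]_d.+1) (v : 'rV[K]_d.+1).

Lemma horner_mx_eigen_split M (zs : seq K) v : v != 0 ->
  v *m horner_mx M (\prod_(z <- zs) ('X - z%:P)) = 0 ->
  exists P : {poly K}, v *m horner_mx M P != 0 /\
    exists a, v *m horner_mx M P *m M = a *: (v *m horner_mx M P).
Proof.
elim: zs v => [|z zs IH] v vn0.
  by rewrite big_nil rmorph1 mulmx1 => v0; rewrite v0 eqxx in vn0.
rewrite big_cons rmorphM /= -mulmxE mulmxA.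
have [vz0 _ | vzn0 /(IH _ vzn0)] := eqVneq (v *m horner_mx M ('X - z%:P)) 0.
  exists 1; rewrite rmorph1 mulmx1; split=> //; exists z.
  move: vz0; rewrite rmorphB /= horner_mx_X horner_mx_C mulmxBr => /eqP.
  by rewrite subr_eq0 mul_mx_scalar => /eqP.
case=> P [wn0 [a eig_w]]; exists (('X - z%:P) * P).
by rewrite rmorphM /= -mulmxE mulmxA; split=> //; exists a.
Qed.

Lemma exists_mulmx_neq0 (M : 'M[K]_d.+1) : M != 0 ->
  exists v : 'rV_d.+1, v *m M != 0.
Proof.
move=> Mn0; have /existsP[i Mi] : [exists i, row i M != 0].
  apply: contraNT Mn0 => /existsPn M0.
  by apply/eqP/row_matrixP => i; rewrite row0; apply/eqP/negbNE/M0.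
by exists (delta_mx 0 i); rewrite -rowE.
Qed.

Lemma exists_coord_neq0 (w : 'rV[K]_d.+1) : w != 0 -> exists j, w 0 j != 0.
Proof.
move=> wn0; apply/existsP; apply: contraNT wn0 => /existsPn w0.
by apply/eqP/rowP => j; rewrite mxE; apply/eqP/negbNE/w0.
Qed.

End Eigenvectors.

Section ClosedEigenvectors.

Variables (K : closedFieldType) (d : nat).
Implicit Types (M C : 'M[K]_d.+1) (v : 'rV[K]_d.+1).

Lemma horner_mx_eigen M v : v != 0 ->
  exists P : {poly K}, v *m horner_mx M P != 0 /\
    exists a, v *m horner_mx M P *m M = a *: (v *m horner_mx M P).
Proof.
move=> vn0; have [zs def_charM] := closed_field_poly_normal (char_poly M).
rewrite (monicP (char_poly_monic M)) scale1r in def_charM.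
by apply: (horner_mx_eigen_split (zs := zs)) => //; rewrite -def_charM Cayley_Hamilton mulmx0.
Qed.

Lemma common_eigenvector_mulmx (Ms : seq 'M[K]_d.+1) v : v != 0 ->
  {in Ms &, forall M N, M *m N = N *m M} ->
  exists C, [/\ {in Ms, forall M, C *m M = M *m C}, v *m C != 0 &
    {in Ms, forall M, exists a, v *m C *m M = a *: (v *m C)}].
Proof.
move=> vn0 cMs.
suff gen : forall S : seq 'M[K]_d.+1, {subset S <= Ms} -> exists C,
    [/\ {in Ms, forall M, C *m M = M *m C}, v *m C != 0 &
        {in S, forall M, exists a, v *m C *m M = a *: (v *m C)}].
  exact: gen Ms (fun _ => id).
elim=> [|M S IH] sSMs.
  by exists 1%:M; rewrite mulmx1; split=> // N _; rewrite mulmx1 mul1mx.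
have [|C [cC vCn0 eigC]] := IH; first by move=> N SN; apply: sSMs; rewrite inE SN orbT.
have [P [vCPn0 [a eigM]]] := horner_mx_eigen M vCn0.
have MsM : M \in Ms by apply: sSMs; rewrite mem_head.
have cP N : N \in Ms -> horner_mx M P *m N = N *m horner_mx M P.
  by move=> MsN; symmetry; apply: comm_mx_horner; apply: cMs.
exists (C *m horner_mx M P); split; rewrite ?mulmxA //.
  by move=> N MsN; rewrite -mulmxA cP // !mulmxA cC.
move=> N; rewrite inE => /predU1P[-> | SN]; first by exists a.
have [b eigN] := eigC N SN; exists b.
rewrite -!mulmxA cP; last by apply: sSMs; rewrite inE SN orbT.
by rewrite !mulmxA eigN -scalemxAl.
Qed.

End ClosedEigenvectors.

Section Representation.

Variables (K : closedFieldType) (gT : finGroupType) (E : {group gT}) (d : nat).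
Variable rho : mx_representation K E d.+1.
Hypothesis E_unit : (#|E|%:R : K) != 0.

Lemma eigen_character z : z \in E -> rho z != 1%:M ->
  {in E &, forall x y, rho x *m rho y = rho y *m rho x} ->
  exists w : 'rV[K]_d.+1, exists chi : gT -> K,
    [/\ w != 0, {in E, forall e, w *m rho e = chi e *: w} & chi z != 1].
Proof.
move=> Ez rz1 rhoC.
(* Taking [w] in the image of [rho z - 1] forces [chi z != 1], as [rho z] is
   semisimple when [#|E|] is invertible in [K]. *)
have [v w0n0] : exists v : 'rV[K]_d.+1, v *m (rho z - 1%:M) != 0.
  by apply: exists_mulmx_neq0; rewrite subr_eq0.
have cMs : {in map rho (enum E) &, forall M N, M *m N = N *m M}.
  by move=> _ _ /mapP[x + ->] /mapP[y + ->]; rewrite !mem_enum; apply: rhoC.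
have [C [cC wn0 eigC]] := common_eigenvector_mulmx w0n0 cMs.
have rhoE e : e \in E -> rho e \in map rho (enum E) by move=> Ee; rewrite map_f ?mem_enum.
set w := _ *m C in wn0 eigC; have [j wj] := exists_coord_neq0 wn0.
exists w, (fun e => (w *m rho e) 0 j / w 0 j).
have w_chi e : e \in E -> w *m rho e = (w *m rho e) 0 j / w 0 j *: w.
  by move=> /rhoE/eigC[a ->]; rewrite mxE mulfK.
split=> //; apply/eqP => chi_z.
have wz : w *m rho z = w by rewrite w_chi // chi_z scale1r.
have wzk k : w *m rho z ^+ k = w.
  by elim: k => [|k IH]; rewrite ?mulmx1 // exprSr -mulmxE mulmxA IH wz.
have def_w : w = v *m C *m (rho z - 1%:M).
  rewrite /w -!mulmxA; congr (_ *m _).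
  by rewrite mulmxBl mulmxBr mulmx1 mul1mx cC ?rhoE.
have : v *m C *m (rho z ^+ #|E| - 1) = #|E|%:R *: w.
  rewrite subrX1 -mulmxE mulmxA -[rho z - 1]/(rho z - 1%:M) -def_w mulmx_sumr.
  under eq_bigr do rewrite wzk.
  by rewrite sumr_const card_ord scaler_nat.
rewrite -repr_mxX // expg_cardG // repr_mx1 subrr mulmx0 => /esym/eqP.
by rewrite scaler_eq0 (negPf E_unit) (negPf wn0).
Qed.

End Representation.

Section TwistedRepresentation.

Variables (K : fieldType) (gT : finGroupType) (E : {group gT}) (d : nat).
Variables (rho : mx_representation K E d.+1) (alpha : {perm gT}) (A : 'M[K]_d.+1).
Hypotheses (E_unit : (#|E|%:R : K) != 0) (A_unit : A \in unitmx).
Hypotheses (aE : {in E, forall x, alpha x \in E})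
  (aM : {in E &, {morph alpha : x y / (x * y)%g}})
  (fpf : {in E, forall x, alpha x = x -> x = 1%g})
  (rhoA : {in E, forall x, rho x *m A = A *m rho (alpha x)}).

Lemma rho_mulA_iter t x : x \in E -> rho x *m A ^+ t = A ^+ t *m rho (iter t alpha x).
Proof.
move=> Ex; elim: t => [|t IH]; first by rewrite !expr0 mulmx1 mul1mx.
by rewrite exprSr -mulmxE mulmxA IH -!mulmxA rhoA ?(iter_in _ aE).
Qed.

Variables (w : 'rV[K]_d.+1) (chi : gT -> K) (z : gT).
Hypotheses (wn0 : w != 0) (w_chi : {in E, forall e, w *m rho e = chi e *: w})
  (Ez : z \in E) (chi_z : chi z != 1).

Lemma chiM : {in E &, {morph chi : x y / (x * y)%g >-> x * y}}.
Proof.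
move=> x y Ex Ey; apply: (scaler_injl wn0) => /=.
rewrite -w_chi ?groupM // repr_mxM // mulmxA w_chi // -scalemxAl w_chi //.
by rewrite scalerA mulrC.
Qed.

Lemma chi_neq0 e : e \in E -> chi e != 0.
Proof.
move=> Ee; apply: contraNneq wn0 => chi_e0; apply/eqP.
have := w_chi Ee; rewrite chi_e0 scale0r => /(congr1 (mulmx^~ (invmx (rho e)))).
by rewrite mulmxK ?repr_mx_unit // mul0mx.
Qed.

Definition chi_period t := [forall e in E, chi (iter t alpha e) == chi e].

Lemma chi_periodP t :
  reflect {in E, forall e, chi (iter t alpha e) = chi e} (chi_period t).
Proof. by apply: (iffP forall_inP) => Pt e Ee; apply/eqP/Pt. Qed.

Lemma chi_periodD a b : chi_period a -> chi_period (a + b) = chi_period b.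
Proof.
move=> /chi_periodP Pa; apply/chi_periodP/chi_periodP => Pab e Ee.
  by rewrite -(Pa _ (iter_in _ aE Ee)) -iterD Pab.
by rewrite iterD Pa ?Pab ?(iter_in _ aE).
Qed.

Lemma chi_period_order : chi_period #[alpha]%g.
Proof. by apply/chi_periodP => e _; rewrite -permX expg_order perm1. Qed.

Lemma chi_period1 : ~~ chi_period 1.
Proof.
apply/chi_periodP => chi_alpha; move/eqP: chi_z; apply.
have : z \in [set (x^-1 * alpha x)%g | x in E] by rewrite fpf_invmul_onto.
case/imsetP => x Ex ->; have Eax := aE Ex.
apply: (mulfI (chi_neq0 Ex)); rewrite -chiM ?groupM ?groupV // mulKVg mulr1.
exact: chi_alpha.
Qed.

Lemma chi_period_dvdn : exists2 m, (1 < m)%N & chi_period =1 dvdn m.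
Proof.
have [m m_gt0 Pm] := dvdn_periods (order_gt0 alpha) chi_period_order chi_periodD.
exists m => //; rewrite ltn_neqAle m_gt0 andbT eq_sym.
by apply: contraNneq chi_period1 => m1; rewrite Pm m1 dvd1n.
Qed.

Definition chi_projector := \sum_(e in E) (chi e)^-1 *: rho e.

Lemma mulA_chi_projector t : w *m A ^+ t *m chi_projector =
  (if chi_period t then #|E|%:R else 0) *: (w *m A ^+ t).
Proof.
have inj_t : injective (iter t alpha) by move=> x y; rewrite -!permX => /perm_inj.
rewrite /chi_projector mulmx_sumr (reindex_inj inj_t) /=.
under eq_bigl do rewrite (perm_iter_stableE t aE).
have term e : e \in E ->
    w *m A ^+ t *m ((chi (iter t alpha e))^-1 *: rho (iter t alpha e)) =
    ((chi (iter t alpha e))^-1 * chi e) *: (w *m A ^+ t).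
  move=> Ee; rewrite -scalemxAr -mulmxA -rho_mulA_iter // mulmxA w_chi //.
  by rewrite -scalemxAl scalerA.
rewrite (eq_bigr _ term) -scaler_suml; congr (_ *: _).
have Eiter e : e \in E -> iter t alpha e \in E by apply: iter_in.
case: (boolP (chi_period t)) => [/chi_periodP Pt | /forall_inPn[e0 Ee0 ne0]].
  rewrite (eq_bigr (fun _ => 1)) ?sumr_const // => e Ee.
  by rewrite Pt ?mulVf ?chi_neq0.
apply: (sum_group_hom_eq0 Ee0) => [x y Ex Ey | ] /=.
  by rewrite (iter_morph t aE aM) // !chiM ?Eiter // invfM mulrACA.
apply: contra ne0 => /eqP chi_e0; apply/eqP.
by rewrite -[RHS](mulVKf (chi_neq0 (Eiter e0 Ee0))) chi_e0 mulr1.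
Qed.

Lemma rpart_annihilated (r : {poly int}) m l :
  horner_mxz A r = 0 -> chi_period =1 dvdn m -> (l < m)%N ->
  w *m horner_mxz A (rpart r m l) = 0.
Proof.
(* Multiplying by [A ^+ (m - l)] moves the exponents [i = l mod m] to the
   multiples of [m], which are exactly those kept by [chi_projector]. *)
move=> rA0 Pm lt_l_m; set s := (m - l)%N.
have As : A ^+ s \in unitmx by apply: unitrX.
suff : #|E|%:R *: (w *m horner_mxz A (rpart r m l) *m A ^+ s) = 0.
  move/eqP; rewrite scaler_eq0 (negPf E_unit) /= => /eqP w_rpart.
  by rewrite -[LHS](mulmxK As) w_rpart mul0mx.
have <- : w *m A ^+ s *m horner_mxz A r *m chi_projector = 0.
  by rewrite rA0 mulmx0 mul0mx.
rewrite horner_mxz_rpart (horner_mxzE A (leqnn (size r))).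
rewrite [w *m A ^+ s *m _]mulmx_sumr mulmx_suml.
rewrite [w *m \sum_(i < _) _]mulmx_sumr mulmx_suml scaler_sumr.
apply: eq_bigr => k _.
rewrite -!scalemxAr -!scalemxAl.
rewrite -[w *m A ^+ s *m A ^+ k]mulmxA -[w *m A ^+ k *m A ^+ s]mulmxA mulmxE -!exprD.
rewrite [(s + k)%N]addnC mulA_chi_projector Pm addnC dvdn_subnD_mod //.
case: eqP => _; last by rewrite mulr0z !scale0r !scaler0.
by rewrite !scalerA mulrC.
Qed.

Lemma twisted_rpart_annihilated (r : {poly int}) : horner_mxz A r = 0 ->
  exists2 u, (1 < u <= maxn 2 (size r))%N &
    forall j, (j < u)%N -> w *m horner_mxz A (rpart r u j) = 0.
Proof.
move=> rA0; have [m m_gt1 Pm] := chi_period_dvdn.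
have w_rpart := rpart_annihilated rA0 Pm.
have [le_m_r | lt_r_m] := leqP m (maxn 2 (size r)); first by exists m; rewrite ?m_gt1.
(* A period beyond [size r] makes each [rpart r m k] a monomial, so all the
   coefficients of [r] vanish in [K] and [u = 2] works. *)
have le_r_m : (size r <= m)%N by rewrite ltnW // (leq_ltn_trans (leq_maxr 2 _)).
have r_eq0 k : (k < size r)%N -> (r`_k)%:~R = 0 :> K.
  move=> lt_k_r; have /w_rpart : (k < m)%N by apply: leq_trans le_r_m.
  rewrite rpart_monomial ?(leq_trans lt_k_r) // /horner_mxz map_polyZ map_polyXn.
  rewrite linearZ /= rmorphXn /= horner_mx_X -scalemxAr => /eqP.
  rewrite scaler_eq0 mulmx_free_eq0 ?(negPf wn0) ?orbF; first by move/eqP.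
  by rewrite row_free_unit unitrX.
exists 2%N; first by rewrite leq_maxl.
move=> j _; rewrite horner_mxz_rpart big1 ?mulmx0 // => i _.
by case: ifP; rewrite ?r_eq0 ?mulr0z ?scale0r.
Qed.

End TwistedRepresentation.

Section PolyAction.

Local Open Scope group_scope.

Variables (aT rT : finGroupType).
Implicit Types (alpha : aT -> aT) (beta : rT -> rT).

Lemma gexpz_in (H : {group aT}) x c : x \in H -> gexpz x c \in H.
Proof. by move=> Hx; case: c => k /=; rewrite ?groupV groupX. Qed.

Lemma polyact_in (H : {group aT}) alpha s x :
  {in H, forall y, alpha y \in H} -> x \in H -> polyact alpha s x \in H.
Proof.
move=> aH Hx; apply: group_prod => i _.
by apply: (iter_in _ aH); apply: gexpz_in.
Qed.

Lemma is_identityS (G H : {group aT}) alpha r :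
  H \subset G -> is_identity G alpha r -> is_identity H alpha r.
Proof. by move=> sHG [rs [sum_rs id_rs]]; exists rs; split=> // x /(subsetP sHG)/id_rs. Qed.

Variables (D H : {group aT}) (f : {morphism D >-> rT}).
Variables (alpha : aT -> aT) (beta : rT -> rT).
Hypotheses (sHD : H \subset D) (aH : {in H, forall y, alpha y \in H})
  (f_alpha : {in H, forall y, f (alpha y) = beta (f y)}).

Lemma morph_gexpz x c : x \in D -> f (gexpz x c) = gexpz (f x) c.
Proof. by move=> Dx; case: c => k /=; rewrite ?morphV ?groupX // morphX. Qed.

Lemma morph_iter t x : x \in H -> f (iter t alpha x) = iter t beta (f x).
Proof. by move=> Hx; elim: t => //= t <-; rewrite f_alpha ?(iter_in _ aH). Qed.

Lemma morph_polyact s x : x \in H -> f (polyact alpha s x) = polyact beta s (f x).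
Proof.
move=> Hx; have sub_D y : y \in H -> y \in D := subsetP sHD y.
rewrite /polyact morph_prod => [|i _]; last by apply/sub_D/(iter_in _ aH)/gexpz_in.
by apply: eq_bigr => i _; rewrite morph_iter ?gexpz_in // morph_gexpz ?sub_D.
Qed.

End PolyAction.

Lemma Aut_iter_gexpz (gT : finGroupType) (G : {group gT}) (alpha : {perm gT})
    (AutGa : alpha \in Aut G) t x c :
  x \in G -> iter t alpha (gexpz x c) = gexpz (iter t alpha x) c.
Proof.
move=> Gx; elim: t => //= t ->.
by rewrite -[alpha _]/(autm AutGa _) morph_gexpz ?(iter_in _ (Aut_closed AutGa)).
Qed.

Section AutAbelem.

Variables (p : nat) (gT : finGroupType) (G N : {group gT}) (alpha : {perm gT}).
Hypotheses (abelN : (p.-abelem N)%g) (ntN : N :!=: 1%g).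
Hypotheses (AutGa : alpha \in Aut G) (sNG : N \subset G)
  (aN : {in N, forall x, alpha x \in N}).

Local Notation ErV := (abelem_rV abelN ntN).
Local Notation rV_E := (rVabelem abelN ntN).
Local Notation d := (abelem_dim' (gval N)).

Let autmN x : autm AutGa x = alpha x.
Proof. by rewrite autmE. Qed.

Lemma abelem_mxP (M1 M2 : 'M['F_p]_d.+1) :
  {in N, forall x, ErV x *m M1 = ErV x *m M2} -> M1 = M2.
Proof.
move=> eqM; apply/row_matrixP => i; rewrite !rowE -[delta_mx 0 i]rVabelemK.
by rewrite eqM ?mem_rVabelem.
Qed.

Definition alpha_fun (v : 'rV['F_p]_d.+1) : 'rV['F_p]_d.+1 := ErV (alpha (rV_E v)).

Fact alpha_fun_linear : linear alpha_fun.
Proof.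
move=> m u v; have [Nu Nv] := (mem_rVabelem abelN ntN u, mem_rVabelem abelN ntN v).
have sN x : x \in N -> x \in G := subsetP sNG x.
rewrite /alpha_fun rVabelemD rVabelemZ -!autmN.
rewrite morphM ?morphX ?sN ?groupX // abelem_rV_M ?abelem_rV_X ?autmN ?groupX ?aN //.
by rewrite natr_Zp.
Qed.

HB.instance Definition _ :=
  GRing.isSemilinear.Build 'F_p _ _ _ alpha_fun
    (GRing.semilinear_linear alpha_fun_linear).

Definition alpha_mx := lin1_mx alpha_fun.

Lemma alpha_mxE x : x \in N -> ErV x *m alpha_mx = ErV (alpha x).
Proof. by move=> Nx; rewrite mul_rV_lin1 /= /alpha_fun abelem_rV_K. Qed.

Lemma alpha_mxX x k : x \in N -> ErV x *m alpha_mx ^+ k = ErV (iter k alpha x).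
Proof.
move=> Nx; elim: k => [|k IH]; first by rewrite expr0 mulmx1.
by rewrite exprSr -mulmxE mulmxA IH alpha_mxE ?(iter_in _ aN).
Qed.

Lemma alpha_mx_unit : alpha_mx \in unitmx.
Proof.
have : alpha_mx ^+ #[alpha]%g = 1.
  by apply: abelem_mxP => x Nx; rewrite alpha_mxX // -permX expg_order perm1 mulmx1.
rewrite -(prednK (order_gt0 alpha)) exprS -mulmxE => /mulmx1_unit[] //.
Qed.

Lemma ErV_gexpz x c : x \in N -> ErV (gexpz x c) = c%:~R *: ErV x.
Proof.
move=> Nx; case: c => k /=; first by rewrite abelem_rV_X.
by rewrite abelem_rV_V ?groupX // abelem_rV_X // NegzE mulrNz scaleNr.
Qed.

Lemma ErV_prod (I : Type) (e : seq I) (F : I -> gT) : (forall i, F i \in N) ->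
  ErV (\prod_(i <- e) F i)%g = \sum_(i <- e) ErV (F i).
Proof.
move=> NF; elim: e => [|i e IH]; first by rewrite !big_nil abelem_rV_1.
by rewrite !big_cons abelem_rV_M ?IH //; apply: group_prod.
Qed.

Lemma ErV_polyact (s : {poly int}) x m : x \in N -> (size s <= m)%N ->
  ErV (polyact alpha s x) = \sum_(i < m) (s`_i)%:~R *: ErV (iter i alpha x).
Proof.
move=> Nx le_s_m; have Gx := subsetP sNG x Nx.
rewrite ErV_prod => [|i]; last by apply/(iter_in _ aN)/gexpz_in.
transitivity (\sum_(i < size s) (s`_i)%:~R *: ErV (iter i alpha x)).
  by apply: eq_bigr => i _; rewrite (Aut_iter_gexpz AutGa) // ErV_gexpz ?(iter_in _ aN).
rewrite [LHS](big_ord_widen m (fun i => (s`_i)%:~R *: ErV (iter i alpha x))) //.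
rewrite big_mkcond /=; apply: eq_bigr => i _.
by case: ltnP => // le_s_i; rewrite nth_default // mulr0z scale0r.
Qed.

Lemma horner_mxz_alpha_mx r : is_identity N alpha r -> horner_mxz alpha_mx r = 0.
Proof.
case=> rs [sum_rs id_rs]; set m := \max_(s <- r :: rs) size s.
have le_m s : s \in r :: rs -> (size s <= m)%N.
  by move=> rs_s; apply: (@leq_bigmax_seq _ (r :: rs) xpredT size s).
apply: abelem_mxP => x Nx; rewrite mulmx0 (horner_mxzE _ (le_m r (mem_head _ _))).
transitivity (ErV (\prod_(s <- rs) polyact alpha s x)%g); last by rewrite id_rs ?abelem_rV_1.
rewrite ErV_prod; last by move=> s; apply: polyact_in.
have ErV_rs s : s \in rs ->
    ErV (polyact alpha s x) = \sum_(i < m) (s`_i)%:~R *: ErV (iter i alpha x).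
  by move=> rs_s; apply: ErV_polyact => //; apply: le_m; rewrite inE rs_s orbT.
rewrite [RHS]big_seq (eq_bigr _ ErV_rs) -[RHS]big_seq exchange_big mulmx_sumr /=.
apply: eq_bigr => i _.
by rewrite -scalemxAr alpha_mxX // -scaler_suml -sum_rs coef_sum rmorph_sum.
Qed.

Lemma abelem_repr_alpha_mx (nNG : G \subset 'N(N)%g) :
  {in G, forall x, abelem_repr abelN ntN nNG x *m alpha_mx =
                   alpha_mx *m abelem_repr abelN ntN nNG (alpha x)}.
Proof.
move=> x Gx; apply: abelem_mxP => y Ny; have Gy := subsetP sNG y Ny.
rewrite !mulmxA -abelem_rV_J // alpha_mxE ?memJ_norm ?(subsetP nNG) // alpha_mxE //.
rewrite -abelem_rV_J ?aN ?Aut_closed //; congr (abelem_rV _ _ _).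
by have := morphJ (autm_morphism AutGa) Gy Gx.
Qed.

End AutAbelem.

Lemma prime_dvdn_Cong (gT : finGroupType) (G N E : {group gT}) (alpha : {perm gT})
    (r : {poly int}) (n p : nat) :
  alpha \in Aut G -> {in G, forall x, alpha x = x -> x = 1%g} ->
  is_identity G alpha r -> is_Cong r n ->
  (N <| G)%g -> (p.-abelem N)%g -> N :!=: 1%g -> {in N, forall x, alpha x \in N} ->
  E \subset G -> {in E, forall x, alpha x \in E} -> coprime p #|E| ->
  {in E &, forall x y, [~ x, y]%g \in 'C(N)%g} -> ~~ (E \subset 'C(N))%g ->
  (p %| n)%N.
Proof.
move=> AutGa fpf id_r Cong_n nsNG abelN ntN aN sEG aE copE cE ncEN.
have [p_pr _ _] := pgroup_pdiv (abelem_pgroup abelN) ntN.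
have [sNG nNG] := andP nsNG.
have sEG' x : x \in E -> x \in G := subsetP sEG x.
pose rG := abelem_repr abelN ntN nNG.
have [K [FtoK _]] := countable_algebraic_closure [the countFieldType of 'F_p].
have pK : p \in [pchar K] := rmorph_pchar FtoK (pchar_Fp p_pr).
pose rho := map_repr FtoK (subg_repr rG sEG).
pose A := map_mx FtoK (alpha_mx alpha abelN ntN).
have E_unit : (#|E|%:R : K) != 0 by rewrite -(dvdn_pcharf pK) -prime_coprime.
have A_unit : A \in unitmx by rewrite map_unitmx (alpha_mx_unit abelN ntN AutGa sNG aN).
have aM : {in E &, {morph alpha : x y / (x * y)%g}}.
  by move=> x y /sEG' Gx /sEG' Gy; apply: (morphicP (Aut_morphic AutGa)).
have fpfE : {in E, forall x, alpha x = x -> x = 1%g} by move=> x /sEG'/fpf.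
have rGA := abelem_repr_alpha_mx abelN ntN AutGa sNG aN nNG.
have rhoA : {in E, forall x, rho x *m A = A *m rho (alpha x)}.
  by move=> x Ex; rewrite !map_reprE -!map_mxM /= rGA ?sEG'.
have rhoC : {in E &, forall x y, rho x *m rho y = rho y *m rho x}.
  move=> x y Ex Ey; have [Gx Gy] := (sEG' x Ex, sEG' y Ey).
  have ker_xy : [~ x, y]%g \in rker rG by rewrite rker_abelem inE groupR ?cE.
  rewrite !map_reprE -!map_mxM /= -!repr_mxM // commgC.
  rewrite (repr_mxM rG) ?groupM ?groupR ?groupV //.
  by move/rkerP: ker_xy => [_ ->]; rewrite mulmx1.
have [z Ez ncNz] := subsetPn ncEN.
have rz1 : rho z != 1%:M.
  apply: contra ncNz; rewrite map_reprE -(map_mx1 FtoK) => /eqP/map_mx_inj rz1.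
  have : z \in rker rG by apply/rkerP; split; rewrite ?sEG'.
  by rewrite rker_abelem => /setIP[].
have rA0 : horner_mxz A r = 0.
  have id_rN := is_identityS sNG id_r.
  by rewrite horner_mxz_map (horner_mxz_alpha_mx abelN ntN AutGa sNG aN id_rN) map_mx0.
have [w [chi [wn0 w_chi chi_z]]] := eigen_character E_unit Ez rz1 rhoC.
have [u u_range w_rpart] :=
  twisted_rpart_annihilated E_unit A_unit aE aM fpfE rhoA wn0 w_chi Ez chi_z rA0.
by rewrite (dvdn_pcharf pK); apply/eqP/(Cong_natr_eq0 Cong_n wn0 u_range w_rpart).
Qed.

Local Close Scope ring_scope.
Local Open Scope group_scope.

Lemma nilpotent_central_quotient (gT : finGroupType) (G N : {group gT}) :
  N \subset 'Z(G) -> nilpotent (G / N) -> nilpotent G.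
Proof.
move=> sNZ nilGN; have nsZG := center_normal G.
have nsNG : N <| G := sub_center_normal sNZ.
by rewrite -quotient_center_nil -(isog_nil (third_isog sNZ nsNG nsZG)) quotient_nil.
Qed.

Lemma Aut_char_invariant (gT : finGroupType) (G N X : {group gT}) (alpha : {perm gT}) :
  alpha \in Aut G -> N \subset G -> {in N, forall x, alpha x \in N} ->
  X \char N -> {in X, forall x, alpha x \in X}.
Proof.
move=> AutGa sNG aN /charP[sXN chX] x Xx.
pose g := restrm sNG (autm_morphism AutGa).
have injg : 'injm g by apply: injm_restrm; apply: injm_autm.
have gN : g @* N = N.
  rewrite morphim_restrm setIid; apply/morphim_fixP => //; first exact: injm_autm.
  by apply/subsetP => _ /morphimP[y _ Ny ->]; apply: aN.
by rewrite -(chX g injg gN) -[alpha x]/(g x) mem_morphim ?(subsetP sXN).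
Qed.

Lemma Aut_fpf_invariant_Hall pi (gT : finGroupType) (G : {group gT}) (alpha : {perm gT}) :
  solvable G -> alpha \in Aut G -> {in G, forall x, alpha x = x -> x = 1} ->
  exists2 H : {group gT}, pi.-Hall(G) H & {in H, forall x, alpha x \in H}.
Proof.
move=> solG AutGa fpf; pose f := autm_morphism AutGa.
have [H0 hallH0] := Hall_exists pi solG.
have hall_fH0 : pi.-Hall(G) (f @* H0).
  by rewrite -{1}(im_autm AutGa); apply: morphim_pHall (pHall_sub hallH0) hallH0.
have [g Gg def_fH0] := Hall_trans solG hall_fH0 hallH0.
have aM := morphicP (Aut_morphic AutGa).
(* Writing the conjugating element as [y^-1 * alpha y] makes [H0 :^ y^-1]
   alpha-invariant. *)
have /imsetP[y Gy def_g] : g \in [set x^-1 * alpha x | x in G].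
  by rewrite (fpf_invmul_onto (Aut_closed AutGa) aM fpf).
have hallH : pi.-Hall(G) (H0 :^ y^-1)%G by rewrite pHallJ ?groupV.
exists (H0 :^ y^-1)%G => // x Hx.
have fH : f @* (H0 :^ y^-1) = H0 :^ y^-1.
  by rewrite morphimJ ?groupV // def_fH0 -conjsgM def_g morphV //= autmE mulgK.
have Gx : x \in G := subsetP (pHall_sub hallH) x Hx.
have : alpha x \in f @* (H0 :^ y^-1) by rewrite -[alpha x]/(f x) mem_morphim.
by rewrite fH.
Qed.

Section CoprimeCentralizer.

Variables (gT : finGroupType) (G N : {group gT}) (alpha : {perm gT}).
Variables (r : {poly int}) (n p : nat).
Hypotheses (solG : solvable G) (AutGa : alpha \in Aut G)
  (fpf : {in G, forall x, alpha x = x -> x = 1})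
  (id_r : is_identity G alpha r) (Cong_n : is_Cong r n).
Hypotheses (nsNG : N <| G) (abelN : p.-abelem N) (ntN : N :!=: 1)
  (aN : {in N, forall x, alpha x \in N}) (p'n : ~~ (p %| n)).

Lemma invariant_coprime_cent (Q : {group gT}) :
  Q \subset G -> {in Q, forall x, alpha x \in Q} -> coprime p #|Q| ->
  Q \subset 'C(N).
Proof.
elim: {Q}_.+1 {-2}Q (ltnSn #|Q|) => // k IH Q ltQk sQG aQ copQ.
apply/negPn/negP => ncQN.
have ntQ : Q :!=: 1 by apply: contraNneq ncQN => ->; rewrite sub1G.
have ltQ'Q := sol_der1_proper solG sQG ntQ; have sQ'Q := proper_sub ltQ'Q.
have cQ'N : Q^`(1) \subset 'C(N).
  apply: IH; first exact: leq_trans (proper_card ltQ'Q) _.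
  - exact: subset_trans sQ'Q sQG.
  - exact: Aut_char_invariant AutGa sQG aQ (der_char 1 Q).
  - exact: coprime_dvdr (cardSg sQ'Q) copQ.
have cQQ : {in Q &, forall x y, [~ x, y] \in 'C(N)}.
  by move=> x y Qx Qy; apply/(subsetP cQ'N)/mem_commg.
have := prime_dvdn_Cong AutGa fpf id_r Cong_n nsNG abelN ntN aN sQG aQ copQ cQQ ncQN.
by rewrite (negPf p'n).
Qed.

Lemma p'group_cent (L : {group gT}) : L \subset G -> p^'.-group L -> L \subset 'C(N).
Proof.
move=> sLG p'L; have [p_pr _ _] := pgroup_pdiv (abelem_pgroup abelN) ntN.
have [K hallK aK] := Aut_fpf_invariant_Hall p^' solG AutGa fpf.
have cKN : K \subset 'C(N).
  apply: invariant_coprime_cent (pHall_sub hallK) aK _.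
  exact: pnat_coprime (pnat_id p_pr) (pHall_pgroup hallK).
have [x Gx sLKx] := Hall_subJ solG hallK sLG p'L.
apply: subset_trans sLKx _.
by rewrite -(normP (subsetP (normal_norm nsNG) x Gx)) centJ conjSg.
Qed.

End CoprimeCentralizer.

Section MinimalInvariantNormal.

Variables (gT : finGroupType) (G N : {group gT}) (alpha : {perm gT}).
Hypotheses (solG : solvable G) (AutGa : alpha \in Aut G).
Hypothesis minN :
  [min N of H | [&& H :!=: 1, H <| G & [forall x in H, alpha x \in H]]].

Lemma min_invariant_normalP :
  [/\ N :!=: 1, N <| G & {in N, forall x, alpha x \in N}].
Proof.
by case/mingroupP: minN => /and3P[ntN nsNG /forall_inP aN] _; split.
Qed.

Lemma min_invariant_normal_eq (M : {group gT}) :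
  M :!=: 1 -> M <| G -> {in M, forall x, alpha x \in M} -> M \subset N -> M :=: N.
Proof.
move=> ntM nsMG aM; case/mingroupP: minN => _; apply.
by rewrite ntM nsMG; apply/forall_inP.
Qed.

Lemma min_invariant_normal_abelem : exists2 p, prime p & p.-abelem N.
Proof.
have [ntN nsNG aN] := min_invariant_normalP; have sNG := normal_sub nsNG.
apply/is_abelemP/charsimple_solvable; last exact: solvableS sNG solG.
apply/charsimpleP; split=> // X ntX chX.
apply: min_invariant_normal_eq (char_sub chX) => //.
  exact: char_normal_trans chX nsNG.
exact: Aut_char_invariant AutGa sNG aN chX.
Qed.

Lemma min_invariant_normal_central (p : nat) : p.-group N ->
  (forall L : {group gT}, L \subset G -> p^'.-group L -> L \subset 'C(N)) ->
  N \subset 'Z(G).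
Proof.
move=> pN p'cent; have [ntN nsNG aN] := min_invariant_normalP.
have [sNG nNG] := andP nsNG.
have [S sylS] := Sylow_exists p G; have sSG := pHall_sub sylS.
have [K hallK] := Hall_exists p^' solG; have sKG := pHall_sub hallK.
have sNS : N \subset S by apply: subset_trans (pcore_sub_Hall sylS); apply: pcore_max.
have ntNZS : N :&: 'Z(S) != 1.
  exact: meet_center_nil (pgroup_nil (pHall_pgroup sylS)) (normalS sNS sSG nsNG) ntN.
have cKN := p'cent K sKG (pHall_pgroup hallK).
have sNZS_Z : N :&: 'Z(S) \subset 'Z(G).
  apply/subsetP => y /setIP[Ny /setIP[_ cSy]]; have Gy := subsetP sNG y Ny.
  suff CGy : 'C_G[y] = G by rewrite /center inE Gy /= -sub_cent1 -{1}CGy subsetIr.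
  have sSC : S \subset 'C_G[y] by rewrite subsetI sSG sub_cent1.
  have sKC : K \subset 'C_G[y] by rewrite subsetI sKG sub_cent1 (subsetP _ y Ny) // centsC.
  apply/eqP; rewrite eqEcard subsetIl /= dvdn_leq ?cardG_gt0 //.
  rewrite -(partnC p (cardG_gt0 G)) -(card_Hall sylS) -(card_Hall hallK).
  by rewrite Gauss_dvd ?cardSg // (pnat_coprime (pHall_pgroup sylS) (pHall_pgroup hallK)).
have aZ := Aut_char_invariant AutGa (subxx G) (Aut_closed AutGa) (center_char G).
rewrite -(min_invariant_normal_eq _ (normalI nsNG (center_normal G)) _ (subsetIl _ _)).
- exact: subsetIr.
- by apply: contraNneq ntNZS => NZ1; rewrite -subG1 -NZ1 subsetI subsetIl.
by move=> x /setIP[Nx Zx]; rewrite inE aN ?aZ.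
Qed.

End MinimalInvariantNormal.

Lemma trivg_pcore_quotient_cent (gT : finGroupType) (G N : {group gT}) (p : nat)
    (pi : nat_pred) :
  solvable G -> N <| G -> p.-group N -> p \notin pi -> 'O_pi(G) = 1 ->
  (forall L : {group gT}, L \subset G -> p^'.-group L -> L \subset 'C(N)) ->
  'O_pi(G / N) = 1.
Proof.
move=> solG nsNG pN pi'p O1 p'cent.
have [X defX sNX nsXG] := inv_quotientN nsNG (pcore_normal pi (G / N)).
have sXG := normal_sub nsXG; have nNX := subset_trans sXG (normal_norm nsNG).
have piXN : pi.-nat #|X : N|.
  by have := pcore_pgroup pi (G / N); rewrite defX /pgroup card_quotient.
have [H hallH] := Hall_exists pi (solvableS sXG solG); have sHX := pHall_sub hallH.
have p'H : p^'.-group H.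
  by apply: sub_pgroup (pHall_pgroup hallH) => q piq; apply: contraNneq pi'p => <-.
have cHN : H \subset 'C(N) := p'cent H (subset_trans sHX sXG) p'H.
have cardH : #|H| = #|X : N|.
  rewrite (card_Hall hallH) -(Lagrange sNX) partnM ?cardG_gt0 ?indexg_gt0 //.
  by rewrite part_p'nat ?mul1n ?part_pnat_id // (pi_pnat pN).
have defNH : N * H = X.
  apply/eqP; rewrite eqEcard mulG_subG sNX sHX /=.
  rewrite TI_cardMg ?cardH ?Lagrange //.
  exact: coprime_TIg (pnat_coprime pN p'H).
have nsHX : H <| X.
  by rewrite /normal sHX -defNH mulG_subG normG andbT (subset_trans _ (cent_sub H)) // centsC.
have sHO : H \subset 'O_pi(G).
  apply: subset_trans (pcore_max (pHall_pgroup hallH) nsHX) _.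
  exact: pcore_max (pcore_pgroup _ _) (char_normal_trans (pcore_char pi X) nsXG).
have H1 : #|H| = 1%N by apply/eqP; rewrite -trivg_card1 -subG1 -O1.
by apply/eqP; rewrite defX trivg_card1 card_quotient // -cardH H1.
Qed.

Section QuotientAutomorphism.

Variables (gT : finGroupType) (G N : {group gT}) (alpha : {perm gT}).
Hypotheses (AutGa : alpha \in Aut G) (nsNG : N <| G)
  (aN : {in N, forall x, alpha x \in N}).

Let sNG := normal_sub nsNG.
Let nNG := normal_norm nsNG.
Let aG := Aut_closed AutGa.
Let aM : {in G &, {morph alpha : x y / x * y}} := morphicP (Aut_morphic AutGa).
Let nN x : x \in G -> x \in 'N(N) := subsetP nNG x.

Let aV x : x \in G -> alpha x^-1 = (alpha x)^-1.
Proof. by move=> Gx; rewrite -!(autmE AutGa) morphV. Qed.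

Definition qaut_fun (C : coset_of N) : coset_of N := coset N (alpha (repr C)).

Lemma qaut_funE x : x \in G -> qaut_fun (coset N x) = coset N (alpha x).
Proof.
move=> Gx; rewrite /qaut_fun; have := mem_repr_coset (coset N x).
rewrite val_coset ?nN // => /rcosetP[k Nk ->]; have Gk := subsetP sNG k Nk.
by rewrite aM // morphM ?nN ?aG //= (coset_id (aN Nk)) mul1g.
Qed.

Lemma qaut_fun_sub : qaut_fun @: (G / N) \subset G / N.
Proof.
apply/subsetP => _ /imsetP[_ /morphimP[x _ Gx ->] ->].
by rewrite qaut_funE // mem_quotient ?aG.
Qed.

Lemma qaut_fun_inj : {in G / N &, injective qaut_fun}.
Proof.
move=> _ _ /morphimP[x _ Gx ->] /morphimP[y _ Gy ->]; rewrite !qaut_funE // => eq_xy.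
have Gxy : x * y^-1 \in G by rewrite groupM ?groupV.
have : alpha (x * y^-1) \in N.
  rewrite aM ?groupV // aV // coset_idr ?groupM ?groupV ?nN ?aG //.
  by rewrite morphM ?morphV ?groupV ?nN ?aG //= eq_xy mulgV.
rewrite perm_stableE // => Nxy /=.
by apply/eqP; rewrite eq_mulgV1 -morphV ?nN // -morphM ?nN ?groupV //= coset_id.
Qed.

Definition qaut : {perm coset_of N} := perm_in qaut_fun_inj qaut_fun_sub.

Lemma qautE x : x \in G -> qaut (coset N x) = coset N (alpha x).
Proof. by move=> Gx; rewrite perm_inE ?qaut_funE ?mem_quotient. Qed.

Lemma Aut_qaut : qaut \in Aut (G / N).
Proof.
rewrite inE perm_in_on /=; apply/morphicP.
move=> _ _ /morphimP[x _ Gx ->] /morphimP[y _ Gy ->].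
by rewrite -morphM ?nN // !qautE ?groupM // aM // morphM ?nN ?aG.
Qed.

Lemma qaut_fpf : {in G, forall x, alpha x = x -> x = 1} ->
  {in G / N, forall C, qaut C = C -> C = 1}.
Proof.
move=> fpf _ /morphimP[x _ Gx ->]; rewrite qautE // => eq_ax.
have aMN := sub_in2 (subsetP sNG) aM; have fpfN := sub_in1 (subsetP sNG) fpf.
have : x^-1 * alpha x \in N.
  by rewrite coset_idr ?groupM ?groupV ?nN ?aG // morphM ?morphV ?groupV ?nN ?aG //= eq_ax mulVg.
rewrite -{1}(fpf_invmul_onto aN aMN fpfN) => /imsetP[k Nk].
by move/(fpf_invmul_inj aM fpf Gx (subsetP sNG k Nk)) ->; rewrite /= coset_id.
Qed.

Lemma qaut_identity r : is_identity G alpha r -> is_identity (G / N) qaut r.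
Proof.
case=> rs [sum_rs id_rs]; exists rs; split=> // _ /morphimP[x _ Gx ->].
have qaut_coset y : y \in G -> coset N (alpha y) = qaut (coset N y) by move=> Gy; rewrite qautE.
rewrite -(eq_bigr _ (fun s _ => morph_polyact nNG aG qaut_coset s Gx)).
by rewrite -morph_prod ?id_rs ?morph1 // => s _; rewrite nN ?polyact_in.
Qed.

End QuotientAutomorphism.

Lemma nilpotent_pi'group_of_trivial_pcore (r : {poly int}) (n : nat) :
  (0 < n)%N -> is_Cong r n ->
  forall (gT : finGroupType) (G : {group gT}) (alpha : {perm gT}),
  solvable G -> alpha \in Aut G -> {in G, forall x, alpha x = x -> x = 1} ->
  is_identity G alpha r -> 'O_(\pi(n))(G) = 1 ->
  nilpotent G /\ \pi(n)^'.-group G.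
Proof.
move=> n_gt0 Cong_n gT G; have [k] := ubnP #|G|.
elim: k gT G => // k IH gT G /ltnSE leGk alpha solG AutGa fpf id_r O1.
have [-> | ntG] := eqsVneq G 1; first by rewrite nilpotent1 pgroup1.
pose P (H : {group gT}) := [&& H :!=: 1, H <| G & [forall x in H, alpha x \in H]].
have [|N minN sNG] := @mingroup_exists _ P G.
  by rewrite /P ntG normal_refl; apply/forall_inP/Aut_closed.
have [ntN nsNG aN] := min_invariant_normalP minN.
have [p p_pr abelN] := min_invariant_normal_abelem solG AutGa minN.
have pN := abelem_pgroup abelN.
have pi'p : p \notin \pi(n).
  apply: contra ntN => pi_p; rewrite -subG1 -O1 pcore_max //.
  exact: pi_pnat pN pi_p.
have p'n : ~~ (p %| n) by move: pi'p; rewrite mem_primes p_pr n_gt0.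
have p'cent := p'group_cent solG AutGa fpf id_r Cong_n nsNG abelN ntN aN p'n.
have [nilGN pi'GN] : nilpotent (G / N) /\ \pi(n)^'.-group (G / N).
  apply: (IH _ _ _ (qaut AutGa nsNG aN)).
  - exact: leq_trans (ltn_quotient ntN sNG) leGk.
  - exact: quotient_sol.
  - exact: Aut_qaut.
  - exact: qaut_fpf.
  - exact: qaut_identity.
  - exact: trivg_pcore_quotient_cent solG nsNG pN pi'p O1 p'cent.
split.
  exact: nilpotent_central_quotient (min_invariant_normal_central solG AutGa minN pN p'cent) nilGN.
rewrite -(pquotient_pgroup _ (normal_norm nsNG)) //.
exact: pi_pnat pN _.
Qed.

Lemma pnat_dvdn_exp n m : (0 < n)%N -> \pi(n).-nat m -> (m %| n ^ m)%N.
Proof.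
move=> n_gt0 pi_m; have m_gt0 : (0 < m)%N by case/andP: pi_m.
apply/dvdn_partP => // q pi_m_q.
have q_pr : prime q by move: pi_m_q; rewrite mem_primes => /andP[].
rewrite p_part pfactor_dvdn ?expn_gt0 ?n_gt0 // lognX.
apply: leq_trans (ltnW (ltn_logl q m_gt0)) _.
by rewrite leq_pmulr // logn_gt0 (pnatPpi pi_m).
Qed.

Lemma pi_ngroup (gT : finGroupType) (H : {group gT}) n :
  (0 < n)%N -> \pi(n).-group H -> is_ngroup H n.
Proof. by move=> n_gt0 piH h Hh; exists #[h]; apply/pnat_dvdn_exp/(mem_p_elt piH). Qed.

Lemma pi'_nprimegroup (gT : finGroupType) (H : {group gT}) n :
  (0 < n)%N -> \pi(n)^'.-group H -> is_nprimegroup H n.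
Proof.
move=> n_gt0 pi'H h Hh hn; apply/eqP; rewrite -order_eq1.
apply/eqP/(pnat_1 (pi := \pi(n))); last exact: mem_p_elt pi'H Hh.
by apply: pnat_dvd (pnat_pi n_gt0); rewrite order_dvdn hn.
Qed.

Unset Implicit Arguments.

Theorem theorem6p2 (gT : finGroupType) (G : {group gT}) (alpha : {perm gT})
    (r : {poly int}) (n : nat) :
  solvable G ->
  alpha \in Aut G ->
  (forall x, x \in G -> alpha x = x -> x = 1) ->
  is_identity G alpha r ->
  is_Cong r n ->
  exists S : {group gT},
    [/\ S \char G, is_ngroup S n, nilpotent (G / S) & is_nprimegroup (G / S) n].
Proof.
move=> solG AutGa fpf id_r Cong_n.
have [-> | n_gt0] := posnP n.
  exists G; split; first exact: char_refl.
  - by move=> h _; exists 1%N; rewrite dvdn0.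
  - by rewrite trivg_quotient nilpotent1.
  - by move=> h; rewrite trivg_quotient => /set1P.
pose S := 'O_(\pi(n))(G); have nsSG : S <| G := pcore_normal _ G.
have aS := Aut_char_invariant AutGa (subxx G) (Aut_closed AutGa) (pcore_char \pi(n) G).
have [nilGS pi'GS] := nilpotent_pi'group_of_trivial_pcore n_gt0 Cong_n
  (quotient_sol _ solG) (Aut_qaut AutGa nsSG aS) (qaut_fpf fpf)
  (qaut_identity AutGa nsSG aS id_r) (trivg_pcore_quotient _ G).
exists [group of S]; split=> //; first exact: pcore_char.
  exact: pi_ngroup n_gt0 (pcore_pgroup _ G).
exact: pi'_nprimegroup n_gt0 pi'GS.
Qed.
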